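(* For integers $0\le k\le n$, $$\frac{[n]!}{[k]!\cdot F^k([n-k]!)}=\sum_{S}\mathrm{wt}(S),$$ where the sum runs over all $k$-element subsets $S$ of $\{1,\ldots,n\}$.
   Context: Work in $\mathbb{Q}(x_1,x_2,\ldots)$ with the field endomorphism $F$ given by $F(x_i)=x_{i+1}$. Define $[n]:=x_1+\cdots+x_n$, $[0]!:=1$, $[n]!:=[n]\cdot F([n-1]!)=\prod_{j=0}^{n-1}F^j[n-j]$. For a $k$-element set $S=\{i_1>i_2>\cdots>i_k\}$ of positive integers, $\mathrm{wt}(S):=\frac{\prod_{j=1}^k F^{i_j-1}[j]}{[k]!}$, with $\mathrm{wt}(\emptyset)=1$. *)

From mathcomp Require Import all_boot all_order all_algebra.
From mathcomp Require Import fraction.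
From mathcomp.multinomials Require Import mpoly.
Set Implicit Arguments. Unset Strict Implicit. Unset Printing Implicit Defensive.
Import GRing.Theory.
Local Open Scope ring_scope.

(* Q(x_1,...,x_N), realised as the fraction field of Q[x_1..x_N].
   Convention: index i : nat (0-based) stands for the paper's x_{i+1}. *)
Definition K (N : nat) := {fraction {mpoly rat[N]}}.

(* the variable x_{i+1} (0 if out of range; never used out of range below) *)
Definition xv (N i : nat) : K N :=
  match (insub i : option 'I_N) with
  | Some j => tofrac ('X_j : {mpoly rat[N]})
  | None => 0
  end.

(* br N j m = F^j [m] = x_{j+1} + ... + x_{j+m} *)
Definition br (N j m : nat) : K N := \sum_(i < m) xv N (j + i).

(* fac N j m = F^j ([m]!) = prod_{t=0}^{m-1} F^(j+t) [m-t] *)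
Definition fac (N j m : nat) : K N := \prod_(t < m) br N (j + t) (m - t).

(* wt(S) for S a subset of {1..n}, encoded as S : {set 'I_n} (i : 'I_n is i+1).
   s = elements of S (0-based) sorted decreasingly, so nth 0 s (j-1) = i_j - 1;
   wt(S) = prod_{j=1}^k F^(i_j - 1)[j] / [k]! *)
Definition wt (N n : nat) (S : {set 'I_n}) : K N :=
  let s := sort (fun a b : nat => (b <= a)%N) [seq val i | i <- enum S] in
  (\prod_(j < #|S|) br N (nth 0%N s j) j.+1) / fac N 0 #|S|.

From mathcomp Require Import all_boot all_order all_algebra.
From mathcomp Require Import fraction.
From mathcomp.multinomials Require Import mpoly.
Import GRing.Theory Num.Theory.
Set Implicit Arguments. Unset Strict Implicit. Unset Printing Implicit Defensive.
Local Open Scope ring_scope.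

(** Writing [[n]!] as [\prod_(t < k) F^t [n - t]] times [F^k ([n - k]!)], the
    left-hand side becomes [\prod_(t < k) F^t [n - t] / [k]!], and every [wt S]
    has denominator [[k]!].  It remains to show that the numerators of the
    weights of the [k]-subsets of [{lo, ..., n - 1}] sum to
    [\prod_(t < k) F^(lo + t) [n - lo - t]].  This goes by descending induction
    on [lo]: a subset either avoids [lo], or is [lo] added below a
    [k - 1]-subset, where [lo] becomes its last (smallest) element and
    contributes the factor [F^lo [k]].  The two products then recombine by
    [[m + 1] = [k] + F^k [m + 1 - k]]. *)

Lemma brD N j a b : br N j (a + b) = br N j a + br N (j + a) b.
Proof.
rewrite /br big_split_ord /=; congr (_ + _).
by apply: eq_bigr => i _; rewrite addnA.
Qed.

Lemma br0 N j : br N j 0 = 0.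
Proof. by rewrite /br big_ord0. Qed.

Definition xpoly N i : {mpoly rat[N]} :=
  if (insub i : option 'I_N) is Some j then 'X_j else 0.

Lemma xvE N i : xv N i = tofrac (xpoly N i).
Proof. by rewrite /xv /xpoly; case: insub => [j|] //=; rewrite tofrac0. Qed.

(* Evaluating at [x_i = 1] sends [F^j [m]] to [m]. *)
Lemma br_neq0 N j m : (0 < m)%N -> (j + m <= N)%N -> br N j m != 0.
Proof.
move=> m_gt0 jm_le.
have -> : br N j m = tofrac (\sum_(i < m) xpoly N (j + i)).
  by rewrite rmorph_sum; apply: eq_bigr => i _; rewrite xvE.
rewrite tofrac_eq0; apply: contraTneq m_gt0 => /(congr1 (meval (fun=> 1%R))).
rewrite raddf_sum meval0 (eq_bigr (fun=> 1)) => [|i _]; last first.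
  rewrite /xpoly insubT => [|?]; last exact: mevalXU.
  by rewrite (leq_trans _ jm_le) // ltn_add2l.
by rewrite sumr_const card_ord => /eqP; rewrite pnatr_eq0 => /eqP ->.
Qed.

Lemma fac_neq0 N j m : (j + m <= N)%N -> fac N j m != 0.
Proof.
move=> jm_le; apply/prodf_neq0 => t _; rewrite br_neq0 ?subn_gt0 //.
by rewrite -addnA subnKC // ltnW.
Qed.

Lemma fac_split N n k : (k <= n)%N ->
  fac N 0 n = (\prod_(t < k) br N t (n - t)) * fac N k (n - k).
Proof.
move=> le_kn; rewrite /fac; move: (n - k)%N (subnKC le_kn) => m <-.
rewrite big_split_ord; congr (_ * _); apply: eq_bigr => t _ //.
by rewrite subnDA addKn.
Qed.

Definition desc_seq n (S : {set 'I_n}) : seq nat :=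
  sort (fun a b : nat => (b <= a)%N) [seq val i | i <- enum S].

Definition wt_num N n (S : {set 'I_n}) : K N :=
  \prod_(j < #|S|) br N (nth 0%N (desc_seq S) j) j.+1.

Lemma wtE N n (S : {set 'I_n}) : wt N S = wt_num N S / fac N 0 #|S|.
Proof. by []. Qed.

Lemma size_desc_seq n (S : {set 'I_n}) : size (desc_seq S) = #|S|.
Proof. by rewrite size_sort size_map cardE. Qed.

Lemma desc_seqU1 n (S : {set 'I_n}) (i0 : 'I_n) :
  (forall i, i \in S -> (i0 < i)%N) -> desc_seq (i0 |: S) = rcons (desc_seq S) i0.
Proof.
move=> gt_i0.
have i0S : i0 \notin S by apply/negP => /gt_i0; rewrite ltnn.
have tot : total (fun a b : nat => (b <= a)%N) by move=> a b; apply: leq_total.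
apply: (@sorted_eq _ (fun a b : nat => (b <= a)%N)).
- by move=> a b c h1 h2; apply: leq_trans h2 h1.
- by move=> a b /andP[h1 h2]; apply/eqP; rewrite eqn_leq h1 h2.
- exact: sort_sorted.
- have := sort_sorted tot [seq val i | i <- enum S]; rewrite -/(desc_seq S).
  case E: (desc_seq S) => [|x s] //= path_s; rewrite rcons_path path_s /=.
  have : last x s \in desc_seq S by rewrite E mem_last.
  by rewrite mem_sort => /mapP[j]; rewrite mem_enum => /gt_i0 /ltnW ? ->.
- rewrite perm_sort perm_sym perm_rcons.
  apply: (@perm_trans _ (val i0 :: [seq val i | i <- enum S])).
    by rewrite perm_cons perm_sort.
  rewrite -map_cons; apply: perm_map.
  apply: uniq_perm; rewrite /= ?mem_enum ?i0S ?enum_uniq // => x.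
  by rewrite in_cons !mem_enum in_setU1.
Qed.

Lemma wt_numU1 N n (S : {set 'I_n}) (i0 : 'I_n) :
  (forall i, i \in S -> (i0 < i)%N) ->
  wt_num N (i0 |: S) = wt_num N S * br N i0 #|S|.+1.
Proof.
move=> gt_i0; have i0S : i0 \notin S by apply/negP => /gt_i0; rewrite ltnn.
rewrite /wt_num cardsU1 i0S add1n big_ord_recr /= desc_seqU1 //.
rewrite nth_rcons size_desc_seq ltnn eqxx; congr (_ * _).
by apply: eq_bigr => j _; rewrite nth_rcons size_desc_seq ltn_ord.
Qed.

Definition above n lo : {set 'I_n} := [set i : 'I_n | lo <= i]%N.

Lemma above_top n : above n n = set0.
Proof. by apply/setP => i; rewrite !inE leqNgt ltn_ord. Qed.

Lemma aboveS n lo (lt_lo : (lo < n)%N) :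
  above n lo.+1 = above n lo :\ Ordinal lt_lo.
Proof.
apply/setP => i; rewrite !inE ltn_neqAle; congr (_ && _).
by rewrite eq_sym -val_eqE.
Qed.

Definition wt_num_above N n lo k : K N :=
  \sum_(S : {set 'I_n} | (#|S| == k) && (S \subset above n lo)) wt_num N S.

Lemma wt_num_above0 N n lo : wt_num_above N n lo 0 = 1.
Proof.
rewrite /wt_num_above (eq_bigl (pred1 set0)) => [|S]; last first.
  by rewrite cards_eq0 /=; case: eqP => // ->; rewrite sub0set.
by rewrite big_pred1_eq /wt_num cards0 big_ord0.
Qed.

Lemma wt_num_above_top N n k : wt_num_above N n n k = (k == 0%N)%:R.
Proof.
case: k => [|k]; first by rewrite wt_num_above0.
rewrite /wt_num_above big_pred0 // => S.
by rewrite above_top subset0 andbC; case: eqP => // ->; rewrite cards0.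
Qed.

Lemma wt_num_aboveS N n lo k : (lo < n)%N ->
  wt_num_above N n lo k.+1 =
  wt_num_above N n lo.+1 k.+1 + wt_num_above N n lo.+1 k * br N lo k.+1.
Proof.
move=> lt_lo; set i0 := Ordinal lt_lo.
rewrite /wt_num_above (bigID (fun S : {set 'I_n} => i0 \in S)) /= addrC.
congr (_ + _); first by apply: eq_bigl => S; rewrite aboveS subsetD1 andbA.
rewrite mulr_suml (reindex_onto (fun S => i0 |: S) (fun S => S :\ i0)) /=; last first.
  by move=> S /andP[_ i0S]; rewrite setD1K.
symmetry; apply: eq_big => [S|S]; last first.
  rewrite aboveS subsetD1 => /andP[/eqP card_S /andP[/subsetP S_above i0S]].
  rewrite wt_numU1 ?card_S // => i /[dup] iS /S_above; rewrite inE ltn_neqAle => ->.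
  by rewrite andbT; apply: contraNneq i0S => /val_inj; rewrite /i0 => ->.
rewrite setU11 andbT subUset sub1set inE leqnn aboveS subsetD1.
case: (boolP (i0 \in S)) => [i0S|i0S]; last first.
  by rewrite setU1K // eqxx cardsU1 i0S eqSS /= !andbT.
rewrite /= !andbF; apply/esym/andP => -[_ /eqP S_def].
by move: i0S; rewrite -S_def setD11.
Qed.

Lemma prod_br_pascal N lo m k :
  \prod_(t < k.+1) br N (lo + t) (m.+1 - t) =
  \prod_(t < k.+1) br N (lo.+1 + t) (m - t) +
  (\prod_(t < k) br N (lo.+1 + t) (m - t)) * br N lo k.+1.
Proof.
rewrite big_ord_recl [X in X + _]big_ord_recr /= addn0 subn0.
rewrite (eq_bigr (fun t : 'I_k => br N (lo.+1 + t) (m - t))) => [|t _]; last first.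
  by rewrite /bump add1n addnS subSS.
have [le_km|lt_mk] := leqP k m.
  have -> : br N lo m.+1 = br N lo k.+1 + br N (lo.+1 + k) (m - k).
    by rewrite addSnnS -brD addSn subnKC.
  by rewrite mulrC mulrDr addrC.
have P0 : \prod_(t < k) br N (lo.+1 + t) (m - t) = 0.
  by apply/eqP/prodf_eq0; exists (Ordinal lt_mk); rewrite //= subnn br0.
by rewrite !P0 !mul0r mulr0 addr0.
Qed.

Lemma wt_num_above_prod N n m k : (m <= n)%N ->
  wt_num_above N n (n - m) k = \prod_(t < k) br N (n - m + t) (m - t).
Proof.
elim: m k => [|m IH] [|k] le_mn; rewrite ?wt_num_above0 ?big_ord0 //.
  by rewrite subn0 wt_num_above_top big_ord_recl sub0n br0 mul0r.
have lt_lo : (n - m.+1 < n)%N by rewrite ltn_subrL (leq_trans _ le_mn).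
have lo_succ : (n - m = (n - m.+1).+1)%N by rewrite subnSK.
by rewrite wt_num_aboveS // -lo_succ !IH ?(ltnW le_mn) // lo_succ prod_br_pascal.
Qed.

Theorem proposition4p2 (N n k : nat) (hkn : (k <= n)%N) (hnN : (n <= N)%N) :
  fac N 0 n / (fac N 0 k * fac N k (n - k)) =
  \sum_(S : {set 'I_n} | #|S| == k) wt N S.
Proof.
rewrite (fac_split N hkn) [fac N 0 k * _]mulrC invfM mulrA mulfK; last first.
  by rewrite fac_neq0 // subnKC.
rewrite (eq_bigr (fun S => wt_num N S / fac N 0 k)) => [|S /eqP <-]; last exact: wtE.
rewrite -mulr_suml; congr (_ / _).
have := wt_num_above_prod N k (leqnn n); rewrite subnn => <-.
apply: eq_bigl => S; rewrite andb_idr // => _.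
by apply/subsetP => i; rewrite inE.
Qed.
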